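(* Let $P$ be a weighted combinatorial optimization problem, let $A$ be a deterministic algorithm for $P$ that uses symbolic perturbation, and let $\mathcal{C}$ be any null case of $P$. (d) If for every instance $(S,w) \notin \mathcal{C}$ the algorithm returns $A(S,w) \in L$ with $\mathrm{cost}(w,A(S,w)) = \mathrm{OPT}(S,w)$, then the same holds for every instance $(S,w)$. (e) For each $S=(n,W,L,\mathrm{cost}) \in P$, let $c(S,\cdot) : W \to \mathbb{R}$ be continuous. Suppose that for every instance $(S,w) \notin \mathcal{C}$ the algorithm returns $A(S,w) \in L$ with $\mathrm{cost}(w,A(S,w)) \le c(S,w)\cdot \mathrm{OPT}(S,w)$. Then the same holds for every instance $(S,w)$.
   Context: Let $Q$ be a subfield of $\mathbb{R}$ (e.g. $\mathbb{R}$, $\mathbb{Q}$, or the real algebraic numbers). Equip $Q^n$ with the Euclidean metric $d$. For $x \in Q^n$ and $\epsilon>0$, the $\epsilon$-neighborhood of $x$ is $\{y \in Q^n \mid d(x,y)<\epsilon\}$. A neighborhood of $x$ is an $\epsilon$-neighborhood of $x$ for some $\epsilon>0$. A set $U \subseteq Q^n$ is open if it contains a neighborhood of each of its points. A set $C \subseteq Q^n$ is nowhere open if it contains no non-empty open subset of $Q^n$. A set $X \subseteq Q^n$ is semi-open if for every $x \in X$ and every neighborhood $N$ of $x$ there is a non-empty open set $U \subseteq Q^n$ with $U \subseteq N \cap X$. For $x \in \mathbb{R}$, $\mathrm{sgn}(x) = x/|x|$ if $x \neq 0$ and $\mathrm{sgn}(0)=0$. Problems: A weighted combinatorial optimization (minimization)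 problem $P$ is a set of problem structures; each structure $S=(n,W,L,\mathrm{cost})$ consists of a positive integer $n$, a semi-open set $W \subseteq Q^n$ of admissible weight vectors, a finite non-empty set $L$ of feasible solutions, and a function $\mathrm{cost} : W \times L \to \mathbb{R}$ such that $\mathrm{cost}(\cdot,l)$ is continuous on $W$ for every $l \in L$. An instance is a pair $(S,w)$ with $S \in P$ and $w \in W$, and $\mathrm{OPT}(S,w)=\min_{l\in L}\mathrm{cost}(w,l)$. A null case of $P$ is a set $\mathcal{C}$ of instances of $P$ such that for every structure $S=(n,W,L,\mathrm{cost}) \in P$ the set $\{w \in W \mid (S,w) \in \mathcal{C}\}$ is nowhere open. Algorithms: A deterministic algorithm $A$ for $P$ assigns to each structure $S=(n,W,L,\mathrm{cost}) \in P$ a finite rooted binary decision tree $T_S$. Each leaf is labelled with an element of $L \cup \{l_f\}$, where $l_f \notin L$ is a special symbol representing failure. Each internal node $u$ is labelled with a continuous branching function $v_u : W \to Q$. On input $(S,w)$, $A$ starts at the root of $T_S$. At an internal node $u$ it moves to the left child if $v_u(w)<0$ and to the right child if $v_u(w)>0$. If $v_u(w)=0$ (a tie), it moves to the left or right child according to a deterministic tie-breaking policy, i.e. a rule fixing, for every instance $(S,w)$ and every internal node $u$ with $v_u(w)=0$, which child is taken. $A$ returns the label $A(S,w)$ of the leaf reached. Directions: Let $W \subseteq Q^n$ be semi-open, $w \in W$, and $h : \mathbb{R} \to Q^n$ with $h(0)=0$ and $h$ continuous at $0$. $W$ continues into direction $h$ at $w$ if there is $\delta>0$ such that for every $0<a<\delta$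 some neighborhood of $w+h(a)$ is contained in $W$. If $W$ continues into direction $h$ at $w$ and $f : W \to Q$ is continuous, then $f$ is increasing (resp. constant, decreasing) into direction $h$ at $w$ if the following holds: there is $\delta>0$ such that for every $0<a<\delta$ there is a neighborhood $N_a \subseteq W$ of $w+h(a)$ with $\mathrm{sgn}(f(y)-f(w)) = 1$ (resp. $0$, $-1$) for all $y \in N_a$. Symbolic perturbation: $A$ uses symbolic perturbation if, for every instance $(S,w)$ with $S=(n,W,L,\mathrm{cost})$, there exists a function $h_{S,w} : \mathbb{R} \to Q^n$ satisfying all of the following: - $h_{S,w}(0)=0$ and $h_{S,w}$ is continuous at $0$; - $W$ continues into direction $h_{S,w}$ at $w$; - every branching function of $T_S$ is decreasing, constant, or increasing into direction $h_{S,w}$ at $w$; - whenever a tie $v_u(w)=0$ occurs at an internal node $u$ on input $(S,w)$, $A$ takes the left child if $v_u$ is decreasing into direction $h_{S,w}$ at $w$, and the right child otherwise. *)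

From Stdlib Require Import Reals List.
Open Scope R_scope.
Set Implicit Arguments.

(** Points of Q^n are represented as functions nat -> R whose first n
    coordinates lie in Q and whose remaining coordinates are 0. *)
Definition vec := nat -> R.

Definition is_subfield (Q : R -> Prop) : Prop :=
  Q 0 /\ Q 1 /\
  (forall x y, Q x -> Q y -> Q (x + y)) /\
  (forall x, Q x -> Q (- x)) /\
  (forall x y, Q x -> Q y -> Q (x * y)) /\
  (forall x, Q x -> x <> 0 -> Q (/ x)).

Definition inQn (Q : R -> Prop) (n : nat) (x : vec) : Prop :=
  (forall i, (i < n)%nat -> Q (x i)) /\ (forall i, (n <= i)%nat -> x i = 0).

Fixpoint sumsq (n : nat) (x y : vec) : R :=
  match n with
  | O => 0
  | S m => sumsq m x y + (x m - y m) ^ 2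
  end.

Definition dist (n : nat) (x y : vec) : R := sqrt (sumsq n x y).

Definition vadd (x y : vec) : vec := fun i => x i + y i.

Definition nbhd (Q : R -> Prop) (n : nat) (x : vec) (eps : R) (y : vec) : Prop :=
  inQn Q n y /\ dist n x y < eps.

Definition is_open (Q : R -> Prop) (n : nat) (U : vec -> Prop) : Prop :=
  (forall x, U x -> inQn Q n x) /\
  (forall x, U x -> exists eps, 0 < eps /\ forall y, nbhd Q n x eps y -> U y).

Definition nowhere_open (Q : R -> Prop) (n : nat) (C : vec -> Prop) : Prop :=
  forall U : vec -> Prop, is_open Q n U -> (forall x, U x -> C x) ->
    forall x, ~ U x.

Definition semi_open (Q : R -> Prop) (n : nat) (X : vec -> Prop) : Prop :=
  (forall x, X x -> inQn Q n x) /\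
  (forall x, X x -> forall eps, 0 < eps ->
     exists U : vec -> Prop, is_open Q n U /\ (exists u, U u) /\
       (forall y, U y -> nbhd Q n x eps y /\ X y)).

Definition continuous_on (n : nat) (W : vec -> Prop) (f : vec -> R) : Prop :=
  forall x, W x -> forall eps, 0 < eps -> exists delta, 0 < delta /\
    forall y, W y -> dist n x y < delta -> Rabs (f y - f x) < eps.

Definition sgn (x : R) : R :=
  match total_order_T x 0 with
  | inleft (left _) => -1
  | inleft (right _) => 0
  | inright _ => 1
  end.

(** Problem structures S = (n, W, L, cost); L is a finite non-empty set,
    given as a type with an exhaustive non-empty list of its elements. *)
Record structure := mkStructure {
  sn : nat;
  sW : vec -> Prop;
  sL : Type;
  sLenum : list sL;
  sLfull : forall l, In l sLenum;
  sLne : sLenum <> nil;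
  scost : vec -> sL -> R
}.

Definition wf_structure (Q : R -> Prop) (S : structure) : Prop :=
  (sn S >= 1)%nat /\ semi_open Q (sn S) (sW S) /\
  (forall l, continuous_on (sn S) (sW S) (fun w => scost S w l)).

Definition OPT (S : structure) (w : vec) : R :=
  match sLenum S with
  | nil => 0
  | x :: xs => fold_right (fun y m => Rmin (scost S w y) m) (scost S w x) xs
  end.

Definition problem := structure -> Prop.

(** Finite rooted binary decision trees; leaves are labelled with
    [Some l] (l in L) or [None] (the failure symbol l_f). *)
Inductive dtree (L : Type) : Type :=
  | Leaf : option L -> dtree L
  | Node : (vec -> R) -> dtree L -> dtree L -> dtree L.

Fixpoint node_fun {L : Type} (t : dtree L) (v : vec -> R) : Prop :=
  match t with
  | Leaf _ => False
  | Node v' l r => v = v' \/ node_fun l v \/ node_fun r v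
  end.

(** A deterministic algorithm: a decision tree per structure, plus a
    deterministic tie-breaking policy: for an instance (S,w) and an internal
    node (identified by its path from the root, as the reversed list of
    directions taken, [true] = left), [atb S w p = true] means "go left". *)
Record algorithm := mkAlgorithm {
  atree : forall S : structure, dtree (sL S);
  atb : forall S : structure, vec -> list bool -> bool
}.

Definition is_algorithm (Q : R -> Prop) (P : problem) (A : algorithm) : Prop :=
  forall S, P S -> forall v, node_fun (atree A S) v ->
    (forall w, sW S w -> Q (v w)) /\ continuous_on (sn S) (sW S) v.

Fixpoint run_tree {L : Type} (t : dtree L) (w : vec) (tb : list bool -> bool)
    (p : list bool) : option L :=
  match t with
  | Leaf o => o
  | Node v l r =>
      match total_order_T (v w) 0 with
      | inleft (left _) => run_tree l w tb (true :: p)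
      | inright _ => run_tree r w tb (false :: p)
      | inleft (right _) =>
          if tb p then run_tree l w tb (true :: p) else run_tree r w tb (false :: p)
      end
  end.

Definition run (A : algorithm) (S : structure) (w : vec) : option (sL S) :=
  run_tree (atree A S) w (atb A S w) nil.

Definition continues_into (Q : R -> Prop) (n : nat) (W : vec -> Prop)
    (h : R -> vec) (w : vec) : Prop :=
  exists delta, 0 < delta /\ forall a, 0 < a < delta ->
    exists eps, 0 < eps /\ forall y, nbhd Q n (vadd w (h a)) eps y -> W y.

Definition moves_into (Q : R -> Prop) (n : nat) (W : vec -> Prop) (f : vec -> R)
    (h : R -> vec) (w : vec) (s : R) : Prop :=
  exists delta, 0 < delta /\ forall a, 0 < a < delta ->
    exists eps, 0 < eps /\
      (forall y, nbhd Q n (vadd w (h a)) eps y -> W y) /\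
      (forall y, nbhd Q n (vadd w (h a)) eps y -> sgn (f y - f w) = s).

Definition increasing_into Q n W f h w := moves_into Q n W f h w 1.
Definition constant_into Q n W f h w := moves_into Q n W f h w 0.
Definition decreasing_into Q n W f h w := moves_into Q n W f h w (-1).

Fixpoint ties_ok {L : Type} (Q : R -> Prop) (n : nat) (W : vec -> Prop)
    (h : R -> vec) (w : vec) (tb : list bool -> bool) (t : dtree L)
    (p : list bool) : Prop :=
  match t with
  | Leaf _ => True
  | Node v l r =>
      match total_order_T (v w) 0 with
      | inleft (left _) => ties_ok Q n W h w tb l (true :: p)
      | inright _ => ties_ok Q n W h w tb r (false :: p)
      | inleft (right _) =>
          (tb p = true <-> decreasing_into Q n W v h w) /\
          (if tb p then ties_ok Q n W h w tb l (true :: p)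
           else ties_ok Q n W h w tb r (false :: p))
      end
  end.

Definition uses_symbolic_perturbation (Q : R -> Prop) (P : problem)
    (A : algorithm) : Prop :=
  forall S, P S -> forall w, sW S w ->
    exists h : R -> vec,
      (forall a, inQn Q (sn S) (h a)) /\
      (forall i, h 0 i = 0) /\
      (forall eps, 0 < eps -> exists delta, 0 < delta /\
         forall a, Rabs a < delta -> dist (sn S) (h a) (h 0) < eps) /\
      continues_into Q (sn S) (sW S) h w /\
      (forall v, node_fun (atree A S) v ->
         decreasing_into Q (sn S) (sW S) v h w \/
         constant_into Q (sn S) (sW S) v h w \/
         increasing_into Q (sn S) (sW S) v h w) /\
      ties_ok Q (sn S) (sW S) h w (atb A S w) (atree A S) nil.

Definition null_case (Q : R -> Prop) (P : problem)
    (C : forall S : structure, vec -> Prop) : Prop :=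
  forall S, P S -> nowhere_open Q (sn S) (fun w => sW S w /\ C S w).

From Pilot Require Import Defs.
From Stdlib Require Import Reals List Lra Classical.
Open Scope R_scope.

(** Let (S,w) be any instance and h the perturbation direction provided for
    it.  The key observation is that the run of the decision tree is stable
    under perturbation: for every small a > 0 there is a neighborhood of
    w + h(a) on which every admissible weight y (with its own perturbation
    direction) follows the same root-to-leaf path as w.  This is proved node
    by node ([branch_stable]): a non-zero branching value keeps its sign by
    continuity, and at a tie the sign of v - v(w) on the perturbed
    neighborhood is exactly the one the tie-breaking rule chose; then by
    induction over the tree ([run_stable]).  Since every neighborhood of
    Q^n contains a non-empty open set, and a null case is nowhere open, such
    a neighborhood contains a weight y outside the null case.  Hence A(S,w)
    is the answer of A on non-null instances arbitrarily close to w
    ([solution_approximable]); as cost, OPT and c are continuous, the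
    (in)equalities valid there pass to the limit ([le_limit], [eq_limit]). *)

(** Stdlib's [Rlimit.dist] would otherwise shadow the Euclidean distance. *)
Notation dist := Defs.dist.

(** ** Euclidean geometry in Q^n *)

Lemma sumsq_nonneg n x y : 0 <= sumsq n x y.
Proof. induction n; simpl; [lra|]. pose proof (pow2_ge_0 (x n - y n)); lra. Qed.

Lemma dist_self n x : dist n x x = 0.
Proof.
  unfold dist. replace (sumsq n x x) with 0; [apply sqrt_0|].
  induction n; simpl; [lra|]. rewrite <- IHn; ring.
Qed.

Lemma dist_translate n x d z :
  (forall i, z i = 0) -> dist n x (vadd x d) = dist n d z.
Proof.
  intros Hz. unfold dist; f_equal.
  induction n; simpl; [lra|]. rewrite IHn, Hz; unfold vadd; ring.
Qed.

Lemma sumsq_quasi_triangle n x y z :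
  sumsq n x z <= 2 * (sumsq n x y + sumsq n y z).
Proof.
  induction n; simpl; [lra|].
  replace (x n - z n) with ((x n - y n) + (y n - z n)) by ring.
  pose proof (pow2_ge_0 ((x n - y n) - (y n - z n))). simpl in *. nra.
Qed.

(** A triangle inequality up to the factor 2; it suffices for all our
    neighborhood arguments and avoids Cauchy-Schwarz. *)
Lemma dist_quasi_triangle n x y z : dist n x z <= 2 * (dist n x y + dist n y z).
Proof.
  unfold dist.
  pose proof (sqrt_pos (sumsq n x y)). pose proof (sqrt_pos (sumsq n y z)).
  pose proof (sqrt_sqrt _ (sumsq_nonneg n x y)).
  pose proof (sqrt_sqrt _ (sumsq_nonneg n y z)).
  pose proof (sumsq_quasi_triangle n x y z).
  rewrite <- (sqrt_pow2 (2 * (sqrt (sumsq n x y) + sqrt (sumsq n y z)))) by lra.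
  apply sqrt_le_1_alt. simpl. nra.
Qed.

Lemma dist_chain n x y z d : dist n x y < d / 4 -> dist n y z < d / 4 -> dist n x z < d.
Proof. intros. pose proof (dist_quasi_triangle n x y z). lra. Qed.

Lemma sgn_spec x :
  (x < 0 /\ sgn x = -1) \/ (x = 0 /\ sgn x = 0) \/ (0 < x /\ sgn x = 1).
Proof. unfold sgn; destruct (total_order_T x 0) as [[H|H]|H]; lra. Qed.

Lemma Rmin_pos a b : 0 < a -> 0 < b -> 0 < Rmin a b.
Proof. intros; apply Rmin_glb_lt; auto. Qed.

Definition direction (Q : R -> Prop) (n : nat) (h : R -> vec) : Prop :=
  (forall a, inQn Q n (h a)) /\ (forall i, h 0 i = 0) /\
  (forall eps, 0 < eps -> exists delta, 0 < delta /\
     forall a, Rabs a < delta -> dist n (h a) (h 0) < eps).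

Definition near_perturbed (Q : R -> Prop) (n : nat) (W : vec -> Prop)
    (h : R -> vec) (w : vec) (Pr : vec -> Prop) : Prop :=
  exists delta, 0 < delta /\ forall a, 0 < a < delta ->
    exists eps, 0 < eps /\ forall y, nbhd Q n (vadd w (h a)) eps y -> W y -> Pr y.

Section Neighborhoods.

Variables (Q : R -> Prop) (hQ : is_subfield Q) (n : nat).

Lemma inQn_vadd x y : inQn Q n x -> inQn Q n y -> inQn Q n (vadd x y).
Proof.
  destruct hQ as (_ & _ & Hadd & _).
  intros [Hx Hx0] [Hy Hy0]; split; intros i Hi; unfold vadd.
  - apply Hadd; auto.
  - rewrite Hx0, Hy0; auto; ring.
Qed.

Lemma nbhd_self x e : inQn Q n x -> 0 < e -> nbhd Q n x e x.
Proof. intros; split; auto. rewrite dist_self; auto. Qed.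

Lemma nbhd_mono x e e' y : nbhd Q n x e y -> e <= e' -> nbhd Q n x e' y.
Proof. intros [H1 H2] H; split; auto; lra. Qed.

(** Every neighborhood contains a non-empty open set (its interior), hence
    a point outside any nowhere open set. *)
Lemma nowhere_open_avoid (X : vec -> Prop) c e :
  nowhere_open Q n X -> inQn Q n c -> 0 < e -> exists y, nbhd Q n c e y /\ ~ X y.
Proof.
  intros HX Hc He.
  set (U := fun y => exists r, 0 < r /\ inQn Q n y /\
                       forall z, nbhd Q n y r z -> nbhd Q n c e z).
  assert (HU : is_open Q n U).
  { split; [intros x (r & _ & Hx & _); exact Hx|].
    intros x (r & Hr & Hx & Hxr). exists (r / 4); split; [lra|].
    intros y [Hyq Hy]. exists (r / 4); split; [lra|split; [exact Hyq|]].
    intros z [Hzq Hz]. apply Hxr. split; [exact Hzq|]. exact (dist_chain n x y z r Hy Hz). }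
  assert (HUc : U c).
  { exists (e / 4); split; [lra|split; [exact Hc|]].
    intros z [Hzq Hz]. split; [exact Hzq|].
    apply (dist_chain n c c z); [rewrite dist_self|]; lra. }
  destruct (classic (exists y, U y /\ ~ X y)) as [(y & (r & Hr & Hyq & Hy) & HnX)|Hall].
  - exists y; split; [apply Hy, nbhd_self|]; auto.
  - exfalso. refine (HX U HU _ c HUc).
    intros y Hy. apply NNPP. intros HnX. apply Hall; eauto.
Qed.

Lemma direction_near h w d : direction Q n h -> 0 < d ->
  exists delta, 0 < delta /\ forall a, 0 < a < delta -> dist n w (vadd w (h a)) < d.
Proof.
  intros (_ & H0 & Hc) Hd. destruct (Hc d Hd) as (dl & Hdl & Hl).
  exists dl; split; [exact Hdl|]. intros a Ha.
  rewrite (dist_translate n w (h a) (h 0) H0). apply Hl. rewrite Rabs_right; lra.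
Qed.

Section NearPerturbed.

Variables (W : vec -> Prop) (h : R -> vec) (w : vec).
Hypotheses (Hw : inQn Q n w) (Hh : direction Q n h).

Lemma near_perturbed_and (Pr1 Pr2 : vec -> Prop) :
  near_perturbed Q n W h w Pr1 -> near_perturbed Q n W h w Pr2 ->
  near_perturbed Q n W h w (fun y => Pr1 y /\ Pr2 y).
Proof.
  intros (d1 & Hd1 & H1) (d2 & Hd2 & H2).
  exists (Rmin d1 d2); split; [apply Rmin_pos; auto|]. intros a Ha.
  pose proof (Rmin_l d1 d2); pose proof (Rmin_r d1 d2).
  destruct (H1 a) as (e1 & He1 & G1); [lra|].
  destruct (H2 a) as (e2 & He2 & G2); [lra|].
  exists (Rmin e1 e2); split; [apply Rmin_pos; auto|]. intros y Hy HWy.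
  split; [apply G1|apply G2]; auto; eapply nbhd_mono; eauto; [apply Rmin_l|apply Rmin_r].
Qed.

Lemma near_perturbed_mono (Pr1 Pr2 : vec -> Prop) :
  (forall y, inQn Q n y -> W y -> Pr1 y -> Pr2 y) ->
  near_perturbed Q n W h w Pr1 -> near_perturbed Q n W h w Pr2.
Proof.
  intros Himp (d & Hd & H). exists d; split; [exact Hd|]. intros a Ha.
  destruct (H a Ha) as (e & He & G). exists e; split; [exact He|].
  intros y Hy HWy. apply Himp; auto. apply Hy.
Qed.

Lemma near_perturbed_close d : 0 < d -> near_perturbed Q n W h w (fun y => dist n w y < d).
Proof.
  intros Hd. destruct (direction_near h w (d / 4) Hh) as (dh & Hdh & Hn); [lra|].
  exists dh; split; [exact Hdh|]. intros a Ha. exists (d / 4); split; [lra|].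
  intros y [_ Hy] _. exact (dist_chain n w _ y d (Hn a Ha) Hy).
Qed.

Lemma moves_near f s : moves_into Q n W f h w s ->
  near_perturbed Q n W h w
    (fun y => exists r, 0 < r /\ forall z, nbhd Q n y r z -> sgn (f z - f w) = s).
Proof.
  intros (d & Hd & Hm). exists d; split; [exact Hd|]. intros a Ha.
  destruct (Hm a Ha) as (e & He & _ & Hs). exists (e / 4); split; [lra|].
  intros y [_ Hy] _. exists (e / 4); split; [lra|].
  intros z [Hzq Hz]. apply Hs. split; [exact Hzq|]. exact (dist_chain n _ y z e Hy Hz).
Qed.

Lemma moves_into_unique f s1 s2 :
  moves_into Q n W f h w s1 -> moves_into Q n W f h w s2 -> s1 = s2.
Proof.
  intros (d1 & Hd1 & H1) (d2 & Hd2 & H2).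
  set (a := Rmin d1 d2 / 2).
  pose proof (Rmin_pos d1 d2 Hd1 Hd2). pose proof (Rmin_l d1 d2). pose proof (Rmin_r d1 d2).
  destruct (H1 a) as (e1 & He1 & _ & G1); [unfold a; lra|].
  destruct (H2 a) as (e2 & He2 & _ & G2); [unfold a; lra|].
  assert (Hc : inQn Q n (vadd w (h a))) by (apply inQn_vadd; [exact Hw|apply Hh]).
  rewrite <- (G1 (vadd w (h a))), <- (G2 (vadd w (h a))); auto using nbhd_self.
Qed.

End NearPerturbed.

Lemma locally_constant_not_decreasing W f y hy r :
  inQn Q n y -> direction Q n hy -> 0 < r ->
  (forall z, nbhd Q n y r z -> f z = f y) -> ~ decreasing_into Q n W f hy y.
Proof.
  intros Hy Hhy Hr Hconst (d & Hd & Hdec).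
  destruct (direction_near hy y r Hhy Hr) as (dh & Hdh & Hn).
  set (b := Rmin d dh / 2).
  pose proof (Rmin_pos d dh Hd Hdh). pose proof (Rmin_l d dh). pose proof (Rmin_r d dh).
  destruct (Hdec b) as (e & He & _ & Hs); [unfold b; lra|].
  assert (Hq : inQn Q n (vadd y (hy b))) by (apply inQn_vadd; [exact Hy|apply Hhy]).
  specialize (Hs _ (nbhd_self _ _ Hq He)).
  rewrite Hconst in Hs by (split; [exact Hq|apply Hn; unfold b; lra]).
  destruct (sgn_spec (f y - f y)) as [[? _]|[[_ ?]|[? _]]]; lra.
Qed.

Lemma near_perturbed_witness W X h w (Pr : vec -> Prop) e0 :
  inQn Q n w -> direction Q n h -> continues_into Q n W h w ->
  nowhere_open Q n (fun y => W y /\ X y) -> near_perturbed Q n W h w Pr -> 0 < e0 ->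
  exists y, W y /\ ~ X y /\ dist n w y < e0 /\ Pr y.
Proof.
  intros Hw Hh (dc & Hdc & Hc) HX HPr He0.
  destruct (near_perturbed_and W h w _ _ HPr (near_perturbed_close W h w Hh e0 He0))
    as (dp & Hdp & Hp).
  set (a := Rmin dc dp / 2).
  pose proof (Rmin_pos dc dp Hdc Hdp). pose proof (Rmin_l dc dp). pose proof (Rmin_r dc dp).
  destruct (Hc a) as (e1 & He1 & G1); [unfold a; lra|].
  destruct (Hp a) as (e2 & He2 & G2); [unfold a; lra|].
  assert (Hq : inQn Q n (vadd w (h a))) by (apply inQn_vadd; [exact Hw|apply Hh]).
  destruct (nowhere_open_avoid _ _ (Rmin e1 e2) HX Hq (Rmin_pos _ _ He1 He2))
    as (y & Hy & HnX).
  assert (HWy : W y) by (apply G1; eapply nbhd_mono; [exact Hy|apply Rmin_l]).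
  destruct (G2 y) as [HPy Hdy]; [eapply nbhd_mono; [exact Hy|apply Rmin_r]|exact HWy|].
  exists y; repeat split; auto.
Qed.

End Neighborhoods.

(** ** Stability of the run of a decision tree under perturbation *)

Definition branch (x : R) (b : bool) : bool :=
  match total_order_T x 0 with
  | inleft (left _) => true
  | inleft (right _) => b
  | inright _ => false
  end.

Lemma branch_neg x b : x < 0 -> branch x b = true.
Proof. unfold branch; destruct (total_order_T x 0) as [[|]|]; auto; lra. Qed.

Lemma branch_zero b : branch 0 b = b.
Proof. unfold branch; destruct (total_order_T 0 0) as [[|]|]; auto; lra. Qed.

Lemma branch_pos x b : 0 < x -> branch x b = false.
Proof. unfold branch; destruct (total_order_T x 0) as [[|]|]; auto; lra. Qed.

Lemma run_tree_Node {L : Type} (v : vec -> R) (l r : dtree L) w tb p :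
  run_tree (Node v l r) w tb p =
  if branch (v w) (tb p) then run_tree l w tb (true :: p) else run_tree r w tb (false :: p).
Proof. simpl; unfold branch; destruct (total_order_T (v w) 0) as [[|]|]; reflexivity. Qed.

Lemma ties_ok_Node {L : Type} Q n W h w tb (v : vec -> R) (l r : dtree L) p :
  ties_ok Q n W h w tb (Node v l r) p <->
  (v w = 0 -> (tb p = true <-> decreasing_into Q n W v h w)) /\
  (if branch (v w) (tb p) then ties_ok Q n W h w tb l (true :: p)
   else ties_ok Q n W h w tb r (false :: p)).
Proof.
  simpl; unfold branch; destruct (total_order_T (v w) 0) as [[H|H]|H];
    [| tauto |]; split; try tauto; intros; split; auto; intros; lra.
Qed.

Section TreeStability.

Variables (Q : R -> Prop) (hQ : is_subfield Q) (n : nat) (W : vec -> Prop).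

Definition good_node (h : R -> vec) (w : vec) (v : vec -> R) : Prop :=
  continuous_on n W v /\
  (decreasing_into Q n W v h w \/ constant_into Q n W v h w \/
   increasing_into Q n W v h w).

Lemma branch_stable h w v (b : bool) :
  inQn Q n w -> W w -> direction Q n h -> good_node h w v ->
  (v w = 0 -> (b = true <-> decreasing_into Q n W v h w)) ->
  near_perturbed Q n W h w (fun y => forall (hy : R -> vec) (b' : bool),
    direction Q n hy -> (v y = 0 -> (b' = true <-> decreasing_into Q n W v hy y)) ->
    branch (v y) b' = branch (v w) b).
Proof.
  intros Hw HWw Hh [Hvc Htri] Htie.
  destruct (Rtotal_order (v w) 0) as [Hneg|[Hzero|Hpos]].
  - destruct (Hvc w HWw (- v w)) as (d & Hd & Hcd); [lra|].
    eapply near_perturbed_mono; [|exact (near_perturbed_close Q n W h w Hh d Hd)].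
    intros y _ HWy Hy hy b' _ _. specialize (Hcd y HWy Hy); apply Rabs_def2 in Hcd.
    rewrite !branch_neg; lra.
  - rewrite Hzero, branch_zero.
    destruct Htri as [Hdec|[Hcst|Hinc]].
    + (* v strictly decreases: y goes left, as w does *)
      eapply near_perturbed_mono; [|exact (moves_near Q n W h w v _ Hdec)].
      intros y Hyq _ (r & Hr & Hs) hy b' _ _.
      destruct (sgn_spec (v y - v w)) as [[? _]|[[_ Hs0]|[_ Hs0]]];
        [|rewrite Hs in Hs0; auto using nbhd_self; lra ..].
      rewrite branch_neg by lra. symmetry; apply Htie; auto.
    + (* v is constant: y is a tie too, broken to the right, as for w *)
      assert (Hb : b = false).
      { destruct b; auto. pose proof (moves_into_unique Q hQ n W h w Hw Hh v _ _
                                         (proj1 (Htie Hzero) eq_refl) Hcst); lra. }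
      eapply near_perturbed_mono; [|exact (moves_near Q n W h w v _ Hcst)].
      intros y Hyq _ (r & Hr & Hs) hy b' Hhy Htie'.
      assert (Hloc : forall z, nbhd Q n y r z -> v z = 0).
      { intros z Hz. specialize (Hs z Hz).
        destruct (sgn_spec (v z - v w)) as [[_ ?]|[[? _]|[_ ?]]]; lra. }
      assert (Hvy : v y = 0) by auto using nbhd_self.
      rewrite Hvy, branch_zero, Hb. destruct b'; auto. exfalso.
      refine (locally_constant_not_decreasing Q hQ n W v y hy r Hyq Hhy Hr _ _).
      * intros z Hz; rewrite Hvy; auto.
      * apply Htie'; auto.
    + (* v strictly increases: y goes right, as w does *)
      assert (Hb : b = false).
      { destruct b; auto. pose proof (moves_into_unique Q hQ n W h w Hw Hh v _ _
                                         (proj1 (Htie Hzero) eq_refl) Hinc); lra. }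
      eapply near_perturbed_mono; [|exact (moves_near Q n W h w v _ Hinc)].
      intros y Hyq _ (r & Hr & Hs) hy b' _ _.
      destruct (sgn_spec (v y - v w)) as [[_ Hs0]|[[_ Hs0]|[? _]]];
        [rewrite Hs in Hs0; auto using nbhd_self; lra ..|].
      rewrite branch_pos, Hb by lra. reflexivity.
  - destruct (Hvc w HWw (v w)) as (d & Hd & Hcd); [lra|].
    eapply near_perturbed_mono; [|exact (near_perturbed_close Q n W h w Hh d Hd)].
    intros y _ HWy Hy hy b' _ _. specialize (Hcd y HWy Hy); apply Rabs_def2 in Hcd.
    rewrite !branch_pos; lra.
Qed.

Lemma run_stable {L : Type} h w tb (t : dtree L) p :
  inQn Q n w -> W w -> direction Q n h ->
  (forall v, node_fun t v -> good_node h w v) ->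
  ties_ok Q n W h w tb t p ->
  near_perturbed Q n W h w (fun y => forall hy tb', direction Q n hy ->
    ties_ok Q n W hy y tb' t p -> run_tree t y tb' p = run_tree t w tb p).
Proof.
  intros Hw HWw Hh. revert p.
  induction t as [o|v l IHl r IHr]; intros p Hnodes Hties.
  { exists 1; split; [lra|]. intros a _. exists 1; split; [lra|]. reflexivity. }
  apply ties_ok_Node in Hties as [Htie Hsub].
  pose proof (branch_stable h w v (tb p) Hw HWw Hh (Hnodes v (or_introl eq_refl)) Htie)
    as Hnode.
  destruct (branch (v w) (tb p)) eqn:Hbr.
  - pose proof (IHl (true :: p) (fun u Hu => Hnodes u (or_intror (or_introl Hu))) Hsub) as IH.
    eapply near_perturbed_mono; [|exact (near_perturbed_and Q n W h w _ _ Hnode IH)].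
    intros y _ _ [Hb Hrun] hy tb' Hhy Hties'.
    apply ties_ok_Node in Hties' as [Htie' Hsub'].
    rewrite (Hb hy (tb' p) Hhy Htie') in Hsub'.
    rewrite !run_tree_Node, (Hb hy (tb' p) Hhy Htie'), Hbr. exact (Hrun hy tb' Hhy Hsub').
  - pose proof (IHr (false :: p) (fun u Hu => Hnodes u (or_intror (or_intror Hu))) Hsub) as IH.
    eapply near_perturbed_mono; [|exact (near_perturbed_and Q n W h w _ _ Hnode IH)].
    intros y _ _ [Hb Hrun] hy tb' Hhy Hties'.
    apply ties_ok_Node in Hties' as [Htie' Hsub'].
    rewrite (Hb hy (tb' p) Hhy Htie') in Hsub'.
    rewrite !run_tree_Node, (Hb hy (tb' p) Hhy Htie'), Hbr. exact (Hrun hy tb' Hhy Hsub').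
Qed.

End TreeStability.

(** ** Continuity at a point of W and passage to the limit *)

Definition continuous_at (n : nat) (W : vec -> Prop) (w : vec) (f : vec -> R) : Prop :=
  forall eps, 0 < eps -> exists delta, 0 < delta /\
    forall y, W y -> dist n w y < delta -> Rabs (f y - f w) < eps.

Section Continuity.

Variables (n : nat) (W : vec -> Prop) (w : vec).

Lemma continuous_at_both f g eps : continuous_at n W w f -> continuous_at n W w g -> 0 < eps ->
  exists delta, 0 < delta /\ forall y, W y -> dist n w y < delta ->
    Rabs (f y - f w) < eps /\ Rabs (g y - g w) < eps.
Proof.
  intros Hf Hg He.
  destruct (Hf eps He) as (d1 & Hd1 & H1). destruct (Hg eps He) as (d2 & Hd2 & H2).
  exists (Rmin d1 d2); split; [apply Rmin_pos; auto|]. intros y Hy Hd.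
  pose proof (Rmin_l d1 d2); pose proof (Rmin_r d1 d2). split; [apply H1|apply H2]; auto; lra.
Qed.

Lemma continuous_at_mult f g : continuous_at n W w f -> continuous_at n W w g ->
  continuous_at n W w (fun y => f y * g y).
Proof.
  intros Hf Hg e He.
  set (m := Rabs (f w) + Rabs (g w) + 1).
  assert (Hm : 1 <= m) by (unfold m; pose proof (Rabs_pos (f w)); pose proof (Rabs_pos (g w)); lra).
  set (e' := Rmin 1 (e / (3 * m))).
  assert (He' : 0 < e') by (apply Rmin_pos; [lra|apply Rdiv_lt_0_compat; lra]).
  assert (He'1 : e' <= 1) by apply Rmin_l.
  assert (He'm : e' * m <= e / 3).
  { assert (e' <= e / (3 * m)) by apply Rmin_r.
    replace (e / 3) with (e / (3 * m) * m) by (field; lra). apply Rmult_le_compat_r; lra. }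
  destruct (continuous_at_both f g e' Hf Hg He') as (d & Hd & H).
  exists d; split; [exact Hd|]. intros y Hy Hdy. destruct (H y Hy Hdy) as [Hfy Hgy].
  replace (f y * g y - f w * g w) with
    ((f y - f w) * (g y - g w) + (f y - f w) * g w + f w * (g y - g w)) by ring.
  pose proof (Rabs_triang ((f y - f w) * (g y - g w) + (f y - f w) * g w) (f w * (g y - g w))).
  pose proof (Rabs_triang ((f y - f w) * (g y - g w)) ((f y - f w) * g w)).
  rewrite !Rabs_mult in *.
  pose proof (Rabs_pos (f y - f w)); pose proof (Rabs_pos (g y - g w)).
  pose proof (Rabs_pos (f w)); pose proof (Rabs_pos (g w)).
  unfold m in *. nra.
Qed.

Lemma continuous_at_Rmin f g : continuous_at n W w f -> continuous_at n W w g ->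
  continuous_at n W w (fun y => Rmin (f y) (g y)).
Proof.
  intros Hf Hg e He. destruct (continuous_at_both f g e Hf Hg He) as (d & Hd & H).
  exists d; split; [exact Hd|]. intros y Hy Hdy. destruct (H y Hy Hdy) as [Hfy Hgy].
  apply Rabs_def2 in Hfy; apply Rabs_def2 in Hgy. apply Rabs_def1;
    unfold Rmin; destruct (Rle_dec (f y) (g y)); destruct (Rle_dec (f w) (g w)); lra.
Qed.

Lemma continuous_at_OPT S :
  (forall l, continuous_at n W w (fun y => scost S y l)) ->
  continuous_at n W w (fun y => OPT S y).
Proof.
  intros Hcost. unfold OPT. destruct (sLenum S) as [|l0 ls].
  - intros e He. exists 1; split; [lra|]. intros. rewrite Rminus_0_r, Rabs_R0; exact He.
  - induction ls as [|l ls IH]; simpl; [apply Hcost|]. apply continuous_at_Rmin; auto.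
Qed.

Lemma le_limit F G : continuous_at n W w F -> continuous_at n W w G ->
  (forall e, 0 < e -> exists y, W y /\ dist n w y < e /\ F y <= G y) -> F w <= G w.
Proof.
  intros HF HG Happ. destruct (Rle_or_lt (F w) (G w)) as [H|H]; [exact H|].
  destruct (continuous_at_both F G ((F w - G w) / 2) HF HG) as (d & Hd & Hc); [lra|].
  destruct (Happ d Hd) as (y & Hy & Hdy & Hle).
  destruct (Hc y Hy Hdy) as [HFy HGy]. apply Rabs_def2 in HFy; apply Rabs_def2 in HGy. lra.
Qed.

Lemma eq_limit F G : continuous_at n W w F -> continuous_at n W w G ->
  (forall e, 0 < e -> exists y, W y /\ dist n w y < e /\ F y = G y) -> F w = G w.
Proof.
  intros HF HG Happ. apply Rle_antisym; [apply le_limit|apply le_limit]; auto;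
    intros e He; destruct (Happ e He) as (y & Hy & Hdy & Heq); exists y; repeat split; auto; lra.
Qed.

End Continuity.

(** ** Answers of A are limits of answers on non-null instances *)

Section Approximation.

Variables (Q : R -> Prop) (hQ : is_subfield Q) (P : problem)
  (hP : forall S, P S -> wf_structure Q S)
  (A : algorithm) (hA : is_algorithm Q P A)
  (hSP : uses_symbolic_perturbation Q P A)
  (C : forall S : structure, vec -> Prop) (hC : null_case Q P C).

Lemma run_approximable S w e : P S -> sW S w -> 0 < e ->
  exists y, sW S y /\ ~ C S y /\ dist (sn S) w y < e /\ run A S y = run A S w.
Proof.
  intros HS Hw He.
  assert (Hwq : inQn Q (sn S) w) by exact (proj1 (proj1 (proj2 (hP S HS))) w Hw).
  destruct (hSP S HS w Hw) as (h & Hh1 & Hh0 & Hhc & Hcont & Hnodes & Hties).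
  assert (Hh : direction Q (sn S) h) by exact (conj Hh1 (conj Hh0 Hhc)).
  pose proof (run_stable Q hQ (sn S) (sW S) h w (atb A S w) (atree A S) nil Hwq Hw Hh
                (fun v Hv => conj (proj2 (hA S HS v Hv)) (Hnodes v Hv)) Hties) as Hstable.
  destruct (near_perturbed_witness Q hQ (sn S) (sW S) (C S) h w _ e Hwq Hh Hcont
              (hC S HS) Hstable He) as (y & HWy & HnC & Hdy & Hrun).
  exists y; repeat split; auto.
  destruct (hSP S HS y HWy) as (hy & Hy1 & Hy0 & Hyc & _ & _ & Htiesy).
  exact (Hrun hy (atb A S y) (conj Hy1 (conj Hy0 Hyc)) Htiesy).
Qed.

Lemma solution_approximable S w (Pr : vec -> sL S -> Prop) : P S -> sW S w ->
  (forall y, sW S y -> ~ C S y -> exists l, run A S y = Some l /\ Pr y l) ->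
  exists l, run A S w = Some l /\
    forall e, 0 < e -> exists y, sW S y /\ dist (sn S) w y < e /\ Pr y l.
Proof.
  intros HS Hw Hsolved.
  destruct (run_approximable S w 1 HS Hw ltac:(lra)) as (y0 & Hy0 & HnC0 & _ & Hrun0).
  destruct (Hsolved y0 Hy0 HnC0) as (l & Hl & _).
  exists l; split; [congruence|]. intros e He.
  destruct (run_approximable S w e HS Hw He) as (y & Hy & HnC & Hdy & Hrun).
  destruct (Hsolved y Hy HnC) as (l' & Hl' & HPr).
  exists y; repeat split; auto. replace l with l' by congruence. exact HPr.
Qed.

End Approximation.

Theorem corollary1 (Q : R -> Prop) (hQ : is_subfield Q) (P : problem)
  (hP : forall S, P S -> wf_structure Q S)
  (A : algorithm) (hA : is_algorithm Q P A)
  (hSP : uses_symbolic_perturbation Q P A)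
  (C : forall S : structure, vec -> Prop) (hC : null_case Q P C) :
  (* (d) *)
  ((forall S, P S -> forall w, sW S w -> ~ C S w ->
      exists l, run A S w = Some l /\ scost S w l = OPT S w) ->
   forall S, P S -> forall w, sW S w ->
      exists l, run A S w = Some l /\ scost S w l = OPT S w) /\
  (* (e) *)
  (forall c : structure -> vec -> R,
     (forall S, P S -> continuous_on (sn S) (sW S) (c S)) ->
     (forall S, P S -> forall w, sW S w -> ~ C S w ->
        exists l, run A S w = Some l /\ scost S w l <= c S w * OPT S w) ->
     forall S, P S -> forall w, sW S w ->
        exists l, run A S w = Some l /\ scost S w l <= c S w * OPT S w).
Proof.
  assert (Hcost : forall S, P S -> forall w, sW S w ->
            forall l, continuous_at (sn S) (sW S) w (fun y => scost S y l))
    by (intros S HS w Hw l; exact (proj2 (proj2 (hP S HS)) l w Hw)).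
  split.
  - intros Hopt S HS w Hw.
    destruct (solution_approximable Q hQ P hP A hA hSP C hC S w
                (fun y l => scost S y l = OPT S y) HS Hw (Hopt S HS)) as (l & Hl & Happ).
    exists l; split; [exact Hl|].
    apply (eq_limit (sn S) (sW S) w (fun y => scost S y l) (fun y => OPT S y)); auto.
    exact (continuous_at_OPT _ _ _ S (Hcost S HS w Hw)).
  - intros c Hc Happrox S HS w Hw.
    destruct (solution_approximable Q hQ P hP A hA hSP C hC S w
                (fun y l => scost S y l <= c S y * OPT S y) HS Hw (Happrox S HS))
      as (l & Hl & Happ).
    exists l; split; [exact Hl|].
    apply (le_limit (sn S) (sW S) w (fun y => scost S y l) (fun y => c S y * OPT S y)); auto.
    apply continuous_at_mult; [exact (Hc S HS w Hw)|exact (continuous_at_OPT _ _ _ S (Hcost S HS w Hw))].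
Qed.
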